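(* Let $G$ be a finite graph, let $\lambda>0$, $\beta \in [0,\infty]$ and set $p=1-e^{-\beta}$. Then for every integer $k\ge1$, \[ Z_k({G,\lambda,\beta}) = \mathbb{E}\, Z({G_p,\lambda})^k .\]
   Context: For a finite graph $G=(V,E)$ and $I\subset V$, $E(I):=\{e\in E: e\subset I\}$. For $\lambda>0$, $\beta\in[0,\infty]$ and $k\ge1$, \[ Z_k(G,\lambda,\beta) := \sum_{I_1,\dots,I_k \subset V} \lambda^{|I_1|+\cdots+|I_k|} e^{-\beta |E(I_1) \cup \cdots \cup E(I_k)|}, \] with the convention $e^{-\infty\cdot 0}=1$ and $e^{-\infty\cdot n}=0$ for $n\ge1$. $G_p$ is the random spanning subgraph of $G$ keeping each edge independently with probability $p$, and $Z(H,\lambda):=\sum_I\lambda^{|I|}$ over independent sets $I$ of $H$ (including the empty set). *)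

From HB Require Import structures.
From mathcomp Require Import all_boot all_order all_algebra.
From mathcomp Require Import all_classical all_reals all_analysis.
Set Implicit Arguments. Unset Strict Implicit. Unset Printing Implicit Defensive.
Import Order.TTheory GRing.Theory Num.Theory.
Local Open Scope ring_scope.

Definition simple_graph (V : finType) (E : {set {set V}}) : Prop :=
  forall e, e \in E -> #|e| = 2%N.

Definition Eind (V : finType) (E : {set {set V}}) (I : {set V}) : {set {set V}} :=
  [set e in E | e \subset I].

Definition expNe (R : realType) (beta : \bar R) : R :=
  match beta with
  | EFin b => expR (- b)
  | +oo%E => 0
  | -oo%E => 0 (* irrelevant: beta >= 0 is assumed *)
  end.

(* e^{-beta n} with the conventions e^{-oo*0} = 1, e^{-oo*n} = 0 (n >= 1). *)
Definition expNe_mul (R : realType) (beta : \bar R) (n : nat) : R :=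
  expNe beta ^+ n.

Definition Zk (R : realType) (V : finType) (E : {set {set V}}) (lambda : R)
  (beta : \bar R) (k : nat) : R :=
  \sum_(I : {ffun 'I_k -> {set V}})
     lambda ^+ (\sum_(j < k) #|I j|)%N
     * expNe_mul beta #|\bigcup_(j < k) Eind E (I j)|.

Definition independent (V : finType) (F : {set {set V}}) (I : {set V}) : bool :=
  [forall e in F, ~~ (e \subset I)].

Definition Zind (R : realType) (V : finType) (F : {set {set V}}) (lambda : R) : R :=
  \sum_(I : {set V} | independent F I) lambda ^+ #|I|.

(* Law of G_p: the spanning subgraph (V, F), F subset E, has probability
   p^|F| (1-p)^|E \ F|. *)
Definition Gp_prob (R : realType) (V : finType) (E : {set {set V}}) (p : R)
  (F : {set {set V}}) : R :=
  p ^+ #|F| * (1 - p) ^+ #|E :\: F|.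

Definition expect_Gp (R : realType) (V : finType) (E : {set {set V}}) (p : R)
  (f : {set {set V}} -> R) : R :=
  \sum_(F in powerset E) Gp_prob E p F * f F.

From HB Require Import structures.
From mathcomp Require Import all_boot all_order all_algebra.
From mathcomp Require Import all_classical all_reals all_analysis.
Import Order.TTheory GRing.Theory Num.Theory.
Local Open Scope ring_scope.

(* Expanding [Z(G_p, lambda)^k] gives a sum over k-tuples (I_1, ..., I_k) of
   sets that are all independent in G_p, weighted by
   [lambda^(|I_1| + ... + |I_k|)].  By linearity of expectation it remains to
   see that all the I_j are independent in G_p exactly when G_p keeps no edge
   of U = E(I_1) u ... u E(I_k), which has probability
   [(1 - p)^|U| = e^(-beta |U|)]. *)

Lemma sum_powerset_binomial (R : comPzSemiRingType) (T : finType)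
    (S : {set T}) (p q : R) :
  \sum_(J in powerset S) p ^+ #|J| * q ^+ #|S :\: J| = (p + q) ^+ #|S|.
Proof.
(* Expanding [\prod_i (a i + b i)] chooses [a] on a set [J] and [b] off it;
   since [a] vanishes outside [S], only the [J \subset S] survive. *)
pose a i : R := if i \in S then p else 0.
pose b i : R := if i \in S then q else 1.
have prod_ab : \prod_i (a i + b i) = (p + q) ^+ #|S|.
  rewrite -prodr_const [RHS]big_mkcond; apply: eq_bigr => i _.
  by rewrite /a /b; case: (i \in S); rewrite ?add0r.
rewrite -prod_ab (@bigA_distr R 0 1 *%R +%R) big_mkcond; apply: eq_bigr => J _.
rewrite powersetE; have [JS | /subsetPn[i iJ iNS]] := boolP (J \subset S).
  rewrite (eq_bigr (fun i =>
    (if i \in J then p else 1) * (if i \in S :\: J then q else 1))).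
    by rewrite big_split /= -!big_mkcond !prodr_const.
  move=> i _; rewrite /a /b !inE; case: (boolP (i \in J)) => [iJ | _] /=.
    by rewrite (fintype.subsetP JS i iJ) mulr1.
  by rewrite mul1r.
by rewrite (bigD1 i) //= iJ /a (negbTE iNS) mul0r.
Qed.

Section RandomSpanningSubgraph.

Variables (R : realType) (V : finType) (E : {set {set V}}).

Lemma sum_Gp_prob_disjoint (U : {set {set V}}) (q : R) :
  U \subset E ->
  \sum_(F in powerset E | [disjoint F & U]) Gp_prob E (1 - q) F = q ^+ #|U|.
Proof.
move=> UE.
rewrite (eq_bigl (fun F => F \in powerset (E :\: U))); last first.
  by move=> F; rewrite !powersetE subsetD.
transitivity (q ^+ #|U| * ((1 - q) + q) ^+ #|E :\: U|); last first.
  by rewrite subrK expr1n mulr1.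
rewrite -sum_powerset_binomial mulr_sumr.
apply: eq_bigr => F; rewrite powersetE => FEU.
have [FE dFU] : F \subset E /\ [disjoint F & U] by apply/andP; rewrite -subsetD.
have UEF : U \subset E :\: F by rewrite subsetD UE disjoint_sym.
have cardEF : #|E :\: F| = (#|U| + #|E :\: U :\: F|)%N.
  rewrite -(cardsID U (E :\: F)) (finset.setIidPr UEF).
  by rewrite !finset.setDDl finset.setUC.
by rewrite /Gp_prob subKr cardEF exprD mulrCA.
Qed.

Lemma independent_disjoint_Eind (F : {set {set V}}) (I : {set V}) :
  F \subset E -> independent F I = [disjoint F & Eind E I].
Proof.
move=> FE; rewrite finset.disjoints_subset.
apply/forall_inP/fintype.subsetP => [indepI e eF | subFI e eF].
  by rewrite !inE (fintype.subsetP FE e eF) (negbTE (indepI e eF)).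
by have := subFI e eF; rewrite !inE (fintype.subsetP FE e eF).
Qed.

Lemma sum_Gp_prob_independent (J : finType) (I : J -> {set V}) (q : R) :
  \sum_(F in powerset E | [forall j, independent F (I j)]) Gp_prob E (1 - q) F
    = q ^+ #|\bigcup_j Eind E (I j)|.
Proof.
rewrite -sum_Gp_prob_disjoint; last first.
  by apply/bigcupsP => j _; apply/fintype.subsetP => e; rewrite inE => /andP[].
apply: eq_bigl => F; apply: andb_id2l; rewrite powersetE => FE.
apply/forallP/bigcup_disjointP => [indepI j _ | disjFI j].
  by rewrite -independent_disjoint_Eind.
by rewrite independent_disjoint_Eind ?disjFI.
Qed.

End RandomSpanningSubgraph.

Lemma Zind_expr (R : realType) (V : finType) (F : {set {set V}}) (lambda : R)
    (k : nat) :
  Zind F lambda ^+ k =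
  \sum_(I : {ffun 'I_k -> {set V}} | [forall j, independent F (I j)])
     lambda ^+ (\sum_(j < k) #|I j|)%N.
Proof.
rewrite -[in LHS](card_ord k) -prodr_const bigA_distr_big.
apply: eq_big => [I | I _]; last by rewrite prodrXr.
by apply/ffun_onP/forallP.
Qed.

Theorem proposition1p7 (R : realType) (V : finType) (E : {set {set V}})
  (lambda : R) (beta : \bar R) (k : nat) :
  simple_graph E -> 0 < lambda -> (0 <= beta)%E -> (1 <= k)%N ->
  let p := 1 - expNe beta in
  Zk E lambda beta k = expect_Gp E p (fun F => Zind F lambda ^+ k).
Proof.
(* The identity is polynomial in [expNe beta]: no hypothesis is needed. *)
move=> _ _ _ _ p; rewrite /Zk /expect_Gp /p.
under [RHS]eq_bigr do rewrite Zind_expr big_mkcond big_distrr.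
rewrite [RHS]exchange_big; apply: eq_bigr => I _ /=.
rewrite /expNe_mul -sum_Gp_prob_independent mulr_sumr big_mkcondr.
by apply: eq_bigr => F _; case: ifP; rewrite ?mulr0 // mulrC.
Qed.
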